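(* Let $\{r_k\}_{k\ge1}$ be a sequence in $\mathbb R^N$ and let $\{a_k\}_{k\ge1}\subset(0,1)$ satisfy $\sum_{k=1}^{+\infty}a_k=+\infty$. Assume that $F_{k+1}:=r_{k+1}+\sum_{j=1}^k a_jr_j$ has a finite limit in $\mathbb R^N$ as $k\to+\infty$. Then $\lim_{k\to+\infty}\|r_k\|=0$. *)

From HB Require Import structures.
From mathcomp Require Import all_boot all_order all_algebra.
From mathcomp Require Import all_classical all_reals all_analysis.
Set Implicit Arguments. Unset Strict Implicit. Unset Printing Implicit Defensive.
Import Order.TTheory GRing.Theory Num.Theory.
Local Open Scope ring_scope.

Definition eucl_norm (R : realType) (N : nat) (v : 'rV[R]_N) : R :=
  Num.sqrt (\sum_(i < N) v ord0 i ^+ 2).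

From HB Require Import structures.
From mathcomp Require Import all_boot all_order all_algebra.
From mathcomp Require Import all_classical all_reals all_analysis.
From mathcomp Require Import lra.
Set Implicit Arguments. Unset Strict Implicit. Unset Printing Implicit Defensive.
Import Order.TTheory GRing.Theory Num.Theory.
Import numFieldNormedType.Exports.
Local Open Scope classical_set_scope.
Local Open Scope ring_scope.

(* Put S_k = a_1 r_1 + ... + a_k r_k and let l be the limit of r_{k+1} + S_k.
   Then S_{k+1} - l = (1 - a_{k+1}) (S_k - l) + a_{k+1} (r_{k+1} + S_k - l),
   so d_k = |S_k - l| satisfies d_{k+1} <= (1 - a_{k+1}) d_k + a_{k+1} f_k
   with f_k -> 0.  Above any level eps the excess of d_k then shrinks by the
   factors 1 - a_{k+1}, whose products are at most 1 / (1 + sum of the a_k),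
   which tends to 0 because the a_k are not summable.  Hence S_k -> l and
   r_{k+1} = (r_{k+1} + S_k - l) - (S_k - l) -> 0. *)

Section contraction.
Variables (R : realType) (b : nat -> R).
Hypothesis b_ge0 : forall k, 0 <= b k.

Lemma contraction_tail_bound (e : nat -> R) (K : nat) :
  (forall k, 0 <= e k) -> (forall k, (K <= k)%N -> e k.+1 <= (1 - b k) * e k) ->
  forall n, (K <= n)%N -> e n * (1 + \sum_(K <= k < n) b k) <= e K.
Proof.
move=> e_ge0 e_contr n /subnKC <-; elim: (n - K)%N => [|m IHm].
  by rewrite addn0 big_geq // addr0 mulr1.
rewrite addnS big_nat_recr ?leq_addr //=.
set t := \sum_(K <= k < K + m) b k in IHm *.
have t_ge0 : 0 <= t by rewrite sumr_ge0.
apply: le_trans IHm.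
have := e_contr _ (leq_addr m K); have := e_ge0 (K + m)%N; have := b_ge0 (K + m)%N.
set x := e (K + m)%N; set c := b (K + m)%N; set y := e (K + m).+1 => c_ge0 x_ge0 yx.
have : y * (1 + (t + c)) <= (1 - c) * x * (1 + (t + c)) by rewrite ler_wpM2r //; lra.
have : 0 <= c * x * (t + c) by rewrite !mulr_ge0 // addr_ge0.
nra.
Qed.

Lemma contraction_cvg0 (e : nat -> R) (K : nat) :
  (forall k, 0 <= e k) -> (forall k, (K <= k)%N -> e k.+1 <= (1 - b k) * e k) ->
  series b @ \oo --> +oo -> e @ \oo --> 0.
Proof.
move=> e_ge0 e_contr /cvgryPge b_divergent; apply/cvgr0Pnorm_le => eps eps_gt0.
near=> n.
have Kn : (K <= n)%N by near: n; exists K.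
have := contraction_tail_bound e_ge0 e_contr Kn; rewrite -sub_series_geq //.
have : e K / eps <= series b n - series b K.
  by rewrite lerBrDl; near: n; apply: b_divergent.
rewrite ler_pdivrMr // ger0_norm //.
set t := series b n - series b K => eK_le en_le.
have t_ge0 : 0 <= t by rewrite -(pmulr_lge0 _ eps_gt0) (le_trans (e_ge0 K)).
rewrite leNgt; apply/negP => eps_lt.
have : eps * (1 + t) < e n * (1 + t) by rewrite ltr_pM2r // ltr_wpDr.
lra.
Unshelve. all: by end_near. Qed.

Hypothesis b_le1 : forall k, b k <= 1.

Lemma excess_contraction (d f : nat -> R) (eps : R) (K : nat) :
  (forall k, d k.+1 <= (1 - b k) * d k + b k * f k) ->
  (forall k, (K <= k)%N -> f k <= eps) ->
  forall k, (K <= k)%N ->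
  Num.max (d k.+1 - eps) 0 <= (1 - b k) * Num.max (d k - eps) 0.
Proof.
move=> d_rec f_le k Kk.
have b1_ge0 : 0 <= 1 - b k by rewrite subr_ge0.
rewrite ge_max mulr_ge0 ?le_max ?lexx ?orbT // andbT.
have d_le : d k - eps <= Num.max (d k - eps) 0 by rewrite le_max lexx.
apply: le_trans (ler_wpM2l b1_ge0 d_le).
have := d_rec k; have := ler_wpM2l (b_ge0 k) (f_le k Kk); lra.
Qed.

Lemma convex_recursion_cvg0 (d f : nat -> R) :
  (forall k, 0 <= d k) ->
  (forall k, d k.+1 <= (1 - b k) * d k + b k * f k) ->
  f @ \oo --> 0 -> series b @ \oo --> +oo -> d @ \oo --> 0.
Proof.
move=> d_ge0 d_rec /cvgr0Pnorm_le f0 b_divergent.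
apply/cvgr0Pnorm_le => eps eps_gt0.
have eps2_gt0 : 0 < eps / 2 by rewrite divr_gt0.
have [K _ f_le] : \forall k \near \oo, f k <= eps / 2.
  by apply: filterS (f0 _ eps2_gt0) => k; apply: le_trans (ler_norm _).
pose e k := Num.max (d k - eps / 2) 0.
have e_ge0 k : 0 <= e k by rewrite le_max lexx orbT.
have /cvgr0Pnorm_le e0 : e @ \oo --> 0.
  exact: contraction_cvg0 e_ge0 (excess_contraction d_rec f_le) b_divergent.
apply: filterS (e0 _ eps2_gt0) => k.
rewrite !ger0_norm // => ek_le.
have : d k - eps / 2 <= e k by rewrite le_max lexx.
lra.
Qed.

End contraction.

Lemma eucl_norm_le (R : realType) (N : nat) (v : 'rV[R]_N) :
  eucl_norm v <= Num.sqrt N%:R * `|v|.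
Proof.
have coord_le i : `|v ord0 i| <= `|v|.
  rewrite [`|v|]mx_normrE.
  exact: (le_bigmax _ (fun ij : 'I_1 * 'I_N => `|v ij.1 ij.2|) (ord0, i)).
rewrite /eucl_norm -[`|v|]ger0_norm // -sqrtr_sqr -sqrtrM ?ler0n //.
rewrite ler_sqrt ?mulr_ge0 //.
apply: (@le_trans _ _ (\sum_(i < N) `|v| ^+ 2)).
  by apply: ler_sum => i _; rewrite -real_normK ?num_real // lerXn2r ?nnegrE.
by rewrite sumr_const card_ord mulr_natl.
Qed.

Lemma eucl_norm_cvg0 (R : realType) (N : nat) (T : Type) (F : set_system T)
    (FF : Filter F) (u : T -> 'rV[R]_N) :
  u @ F --> (0 : 'rV[R]_N) -> eucl_norm (u t) @[t --> F] --> 0.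
Proof.
move=> u0.
apply: (@squeeze_cvgr _ _ _ _ (fun=> 0) (fun t => Num.sqrt N%:R * `|u t|)).
- by near=> t; rewrite eucl_norm_le andbT sqrtr_ge0.
- exact: cvg_cst.
- by rewrite -(mulr0 (Num.sqrt N%:R)); apply: cvgM; [exact: cvg_cst | exact/norm_cvg0P].
Unshelve. all: by end_near. Qed.

Lemma convex_step_split (R : pzRingType) (V : lmodType R) (s x l : V) (c : R) :
  s + c *: x - l = (1 - c) *: (s - l) + c *: (x + s - l).
Proof.
rewrite scalerBl scale1r -[RHS]addrA [- _ + _]addrC -scalerBr.
by rewrite opprB addrA subrK addrK addrAC.
Qed.

Theorem lemmaA5 (R : realType) (N : nat) (r : nat -> 'rV[R]_N) (a : nat -> R)
  (ha : forall k, (1 <= k)%N -> 0 < a k < 1)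
  (hsum : (fun n => \sum_(1 <= k < n.+1) a k) @ \oo --> +oo)
  (hF : exists l : 'rV[R]_N,
      (fun k => r k.+1 + \sum_(1 <= j < k.+1) a j *: r j) @ \oo --> l) :
  (fun k => eucl_norm (r k)) @ \oo --> 0.
Proof.
case: hF => l Fl.
pose S k : 'rV[R]_N := \sum_(1 <= j < k.+1) a j *: r j.
have Fl0 : (fun k => r k.+1 + S k - l) @ \oo --> (0 : 'rV[R]_N).
  by apply/subr_cvg0.
have a_ge0 k : 0 <= a k.+1 by have /andP[/ltW] := ha k.+1 isT.
have a_le1 k : a k.+1 <= 1 by have /andP[_ /ltW] := ha k.+1 isT.
have S_rec k : S k.+1 - l = (1 - a k.+1) *: (S k - l) + a k.+1 *: (r k.+1 + S k - l).
  by rewrite -convex_step_split /S big_nat_recr.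
have Sl0 : (fun k => S k - l) @ \oo --> (0 : 'rV[R]_N).
  apply/norm_cvg0P.
  apply: (convex_recursion_cvg0 a_ge0 a_le1 (f := fun k => `|r k.+1 + S k - l|)).
  - by [].
  - move=> k; rewrite S_rec; apply: le_trans (ler_normD _ _) _.
    by rewrite !normrZ !ger0_norm ?subr_ge0.
  - exact/norm_cvg0P.
  - suff -> : series (fun k => a k.+1) = (fun n => \sum_(1 <= k < n.+1) a k) by [].
    by apply/funext => n; rewrite big_add1.
have r0 : r @ \oo --> (0 : 'rV[R]_N).
  rewrite -cvg_shiftS -[0]subr0.
  suff -> : [sequence r n.+1]_n = (fun k => r k.+1 + S k - l) - (fun k => S k - l).
    exact: cvgB.
  by apply/funext => k /=; rewrite opprB addrA subrK addrK.
exact: eucl_norm_cvg0.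
Qed.
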